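(* Let $\lambda>1$, $L=\ln\lambda$, and let $\alpha$ be Diophantine with constants $\kappa,\tau>0$. Fix $\Gamma$ with $L<\Gamma\le 2L$. For $n\in\mathbb{Z}$ let $$\Theta_1=\{\theta\in[0,1]:\ e^{-2\Gamma|n|}\le|\sin\pi(2\theta+n\alpha)|\le e^{-\Gamma|n|}\},$$ $$\Theta_2=\{\theta\in[0,1]:\ \text{there exists } k\in\mathbb{Z},\ |k|\ge 1000|n|,\ \text{with } |\sin\pi(2\theta+k\alpha)|\le e^{-\frac{L}{100}|k|}\},$$ and $\Theta=\Theta_1\setminus\Theta_2$. Then there is a constant $C=C(\kappa,\tau)$ such that, for $|n|$ sufficiently large, for every $\theta\in\Theta$ and every $m>C|n|$, $$\min_{|x|\le m}|\sin\pi(2\theta+x\alpha)|\ge e^{-\frac{L}{100}|m|}.$$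
   Context: The frequency $\alpha$ is Diophantine with constants $\kappa,\tau>0$ if $\|k\alpha\|_{\mathbb{R}/\mathbb{Z}}\ge \tau/|k|^{\kappa}$ for all integers $k\neq 0$, where $\|x\|_{\mathbb{R}/\mathbb{Z}}=\inf_{j\in\mathbb{Z}}|x-j|$. The minimum is over integers $x$. *)

From Stdlib Require Import Reals ZArith.
Open Scope R_scope.

(* ||x||_{R/Z} >= c, i.e. the infimum over j in Z of |x - j| is at least c. *)
Definition distZ_ge (x c : R) : Prop := forall j : Z, c <= Rabs (x - IZR j).

Definition diophantine (alpha kappa tau : R) : Prop :=
  0 < kappa /\ 0 < tau /\
  forall k : Z, k <> 0%Z ->
    distZ_ge (IZR k * alpha) (tau / Rpower (IZR (Z.abs k)) kappa).

Definition Theta1 (Gamma alpha : R) (n : Z) (theta : R) : Prop :=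
  0 <= theta <= 1 /\
  exp (- (2 * Gamma * IZR (Z.abs n))) <= Rabs (sin (PI * (2 * theta + IZR n * alpha))) /\
  Rabs (sin (PI * (2 * theta + IZR n * alpha))) <= exp (- (Gamma * IZR (Z.abs n))).

Definition Theta2 (L alpha : R) (n : Z) (theta : R) : Prop :=
  0 <= theta <= 1 /\
  exists k : Z, (Z.abs k >= 1000 * Z.abs n)%Z /\
    Rabs (sin (PI * (2 * theta + IZR k * alpha))) <= exp (- (L / 100 * IZR (Z.abs k))).

Definition Theta (L Gamma alpha : R) (n : Z) (theta : R) : Prop :=
  Theta1 Gamma alpha n theta /\ ~ Theta2 L alpha n theta.

(** If [sin π(2θ+xα)] were smaller than [e^{-L m/100}] for some [|x| <= m], then
    [x] cannot be [n] (there [Θ₁] bounds the sine from below), nor satisfy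
    [|x| >= 1000|n|] (that is excluded by [θ ∉ Θ₂]).  In the remaining case both
    [sin π(2θ+nα)] and [sin π(2θ+xα)] are at most [e^{-L|n|}], hence so is, up to a
    factor 2, [sin π(x-n)α]; Jordan's inequality turns this into
    [‖(x-n)α‖ < 2e^{-L|n|}], while the Diophantine condition with
    [0 < |x-n| <= 1001|n|] gives [‖(x-n)α‖ >= τ (1001|n|)^{-κ}].  Exponential
    decay beats this polynomial bound once [|n|] is large, so [C = 1000] works. *)

From Stdlib Require Import Reals Lra Lia Psatz ZArith.
Open Scope R_scope.

Lemma exp_le x y : x <= y -> exp x <= exp y.
Proof. intros [Hlt | ->]; [left; apply exp_increasing |]; lra. Qed.

Lemma ln_le_sub1 y : 0 < y -> ln y <= y - 1.
Proof. intros Hy. pose proof (exp_ineq1_le (ln y)) as H. rewrite exp_ln in H; lra. Qed.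

Lemma exp_decay_dominates_power L kappa eps c :
  0 < L -> 0 < kappa -> 0 < eps -> 0 < c ->
  exists T, 0 < T /\
    forall t, T <= t -> exp (- (L * t)) * Rpower (c * t) kappa < eps.
Proof.
  intros HL Hk He Hc.
  (* [ln y <= d y - 1 - ln d] with [d] chosen so that [κ d c t = L t / 2]. *)
  set (d := L / (2 * c * kappa)).
  assert (Hd : 0 < d) by (unfold d; apply Rdiv_lt_0_compat; nra).
  set (K := - kappa * ln d - ln eps).
  pose proof (Rmax_l 1 (2 * K / L + 1)) as HT1. pose proof (Rmax_r 1 (2 * K / L + 1)) as HTK.
  exists (Rmax 1 (2 * K / L + 1)). split; [lra |]. intros t Ht.
  assert (HK : 2 * K < L * t).
  { replace (2 * K) with (2 * K / L * L) by (field; lra).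
    rewrite (Rmult_comm L). apply Rmult_lt_compat_r; lra. }
  assert (Hct : 0 < c * t) by (apply Rmult_lt_0_compat; lra).
  assert (Hln : ln (c * t) <= d * (c * t) - 1 - ln d).
  { replace (ln (c * t)) with (ln (d * (c * t)) - ln d)
      by (rewrite ln_mult by lra; ring).
    pose proof (ln_le_sub1 (d * (c * t)) ltac:(apply Rmult_lt_0_compat; lra)). lra. }
  assert (Hdk : kappa * (d * (c * t)) = L * t / 2) by (unfold d; field; lra).
  assert (Hexp : - (L * t) + kappa * ln (c * t) < ln eps) by (unfold K in HK; nra).
  apply exp_increasing in Hexp. rewrite exp_ln in Hexp by lra.
  unfold Rpower. rewrite <- exp_plus. lra.
Qed.

Lemma sin_ge_third a : 0 <= a -> a <= 2 -> a / 3 <= sin a.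
Proof.
  intros H0 H2. pose proof PI2_3_2.
  destruct (sin_bound a 0 H0 ltac:(lra)) as [Hs _].
  unfold sin_approx, sin_term in Hs. simpl in Hs. nra.
Qed.

Lemma Rabs_sin_PI_ge z : Rabs z <= 1 / 2 -> PI * Rabs z <= 3 * Rabs (sin (PI * z)).
Proof.
  intros Hz. pose proof PI_4. pose proof PI_RGT_0.
  assert (Hnonneg : forall y, 0 <= y <= 1 / 2 -> PI * y <= 3 * Rabs (sin (PI * y))).
  { intros y Hy.
    assert (0 <= PI * y) by (apply Rmult_le_pos; lra).
    assert (PI * y <= 2) by nra.
    pose proof (sin_ge_third (PI * y)). rewrite Rabs_right; lra. }
  destruct (Rle_or_lt 0 z).
  - rewrite Rabs_right in * by lra. apply Hnonneg; lra.
  - rewrite Rabs_left in * by lra.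
    replace (PI * z) with (- (PI * - z)) by ring. rewrite sin_neg, Rabs_Ropp.
    apply Hnonneg; lra.
Qed.

Lemma Rabs_sin_PI_ge_dist_int d :
  exists j : Z, PI * Rabs (d - IZR j) <= 3 * Rabs (sin (PI * d)).
Proof.
  destruct (archimed (d + 1 / 2)) as [Hup Hup1].
  (* An integer nearest to [d]: [|d - j| <= 1/2]. *)
  set (j := (up (d + 1 / 2) - 1)%Z). exists j.
  assert (Hj : IZR j = IZR (up (d + 1 / 2)) - 1) by (unfold j; rewrite minus_IZR; ring).
  assert (Hsin : sin (IZR j * PI) = 0) by (apply sin_eq_0_1; eauto).
  assert (Hcos : Rabs (cos (IZR j * PI)) = 1).
  { pose proof (sin2_cos2 (IZR j * PI)) as H. rewrite Hsin in H. unfold Rsqr in H.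
    destruct (Rle_or_lt 0 (cos (IZR j * PI))).
    - rewrite Rabs_right by lra. nra.
    - rewrite Rabs_left by lra. nra. }
  replace (PI * d) with (PI * (d - IZR j) + IZR j * PI) by ring.
  rewrite sin_plus, Hsin, Rmult_0_r, Rplus_0_r, Rabs_mult, Hcos, Rmult_1_r.
  apply Rabs_sin_PI_ge. apply Rabs_le. lra.
Qed.

Lemma diophantine_sin_ge alpha kappa tau k :
  diophantine alpha kappa tau -> k <> 0%Z ->
  tau / Rpower (IZR (Z.abs k)) kappa <= Rabs (sin (PI * (IZR k * alpha))).
Proof.
  intros [_ [_ Hdio]] Hk.
  destruct (Rabs_sin_PI_ge_dist_int (IZR k * alpha)) as [j Hj].
  pose proof (Hdio k Hk j). pose proof PI_RGT_0. pose proof PI2_3_2.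
  pose proof (Rabs_pos (IZR k * alpha - IZR j)). nra.
Qed.

Lemma Rabs_sin_sub_le x y : Rabs (sin (x - y)) <= Rabs (sin x) + Rabs (sin y).
Proof.
  rewrite sin_minus. unfold Rminus.
  eapply Rle_trans; [apply Rabs_triang |]. rewrite Rabs_Ropp, !Rabs_mult.
  assert (Rabs (cos x) <= 1) by (apply Rabs_le; apply COS_bound).
  assert (Rabs (cos y) <= 1) by (apply Rabs_le; apply COS_bound).
  pose proof (Rabs_pos (sin x)). pose proof (Rabs_pos (sin y)). nra.
Qed.

Lemma diophantine_sin_pair_ge alpha kappa tau a k :
  diophantine alpha kappa tau -> k <> 0%Z ->
  tau / Rpower (IZR (Z.abs k)) kappa
    <= Rabs (sin (PI * a)) + Rabs (sin (PI * (a + IZR k * alpha))).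
Proof.
  intros Hdio Hk. eapply Rle_trans; [apply (diophantine_sin_ge _ _ _ _ Hdio Hk) |].
  replace (PI * (IZR k * alpha)) with (PI * (a + IZR k * alpha) - PI * a) by ring.
  rewrite (Rplus_comm (Rabs (sin (PI * a)))). apply Rabs_sin_sub_le.
Qed.

Lemma diophantine_sines_not_both_small alpha kappa tau a k B E :
  diophantine alpha kappa tau -> k <> 0%Z -> IZR (Z.abs k) <= B ->
  Rabs (sin (PI * a)) <= E -> Rabs (sin (PI * (a + IZR k * alpha))) <= E ->
  tau <= 2 * E * Rpower B kappa.
Proof.
  intros Hdio Hk HB Ha Hb.
  pose proof (diophantine_sin_pair_ge _ _ _ a _ Hdio Hk) as Hpair.
  assert (Hk_pos : 0 < IZR (Z.abs k)) by (apply IZR_lt; lia).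
  set (P := Rpower (IZR (Z.abs k)) kappa) in *.
  assert (HP_le : P <= Rpower B kappa)
    by (apply Rle_Rpower_l; [destruct Hdio; lra | lra]).
  assert (HP : 0 < P) by apply exp_pos.
  assert (Htau : tau = tau / P * P) by (field; lra).
  pose proof (Rabs_pos (sin (PI * a))). nra.
Qed.

Lemma not_Theta2_sin_gt L alpha n theta x :
  0 <= theta <= 1 -> ~ Theta2 L alpha n theta -> (1000 * Z.abs n <= Z.abs x)%Z ->
  exp (- (L / 100 * IZR (Z.abs x))) < Rabs (sin (PI * (2 * theta + IZR x * alpha))).
Proof.
  intros Htheta HT2 Hx. apply Rnot_le_lt. intros Hle.
  apply HT2. split; [exact Htheta |]. exists x. split; [lia | exact Hle].
Qed.

Theorem lemma4p2 :
  forall kappa tau : R, 0 < kappa -> 0 < tau ->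
  exists C : R,
  forall (lambda alpha Gamma : R),
    1 < lambda ->
    diophantine alpha kappa tau ->
    ln lambda < Gamma -> Gamma <= 2 * ln lambda ->
    exists N : Z, forall n : Z, (N <= Z.abs n)%Z ->
      forall theta : R, Theta (ln lambda) Gamma alpha n theta ->
      forall m : Z, C * IZR (Z.abs n) < IZR m ->
      forall x : Z, (Z.abs x <= Z.abs m)%Z ->
        exp (- (ln lambda / 100 * IZR (Z.abs m)))
          <= Rabs (sin (PI * (2 * theta + IZR x * alpha))).
Proof.
  intros kappa tau Hkappa Htau. exists 1000.
  intros lambda alpha Gamma Hlambda Hdio HGamma_lo HGamma_hi.
  assert (HL : 0 < ln lambda) by (rewrite <- ln_1; apply ln_increasing; lra).
  set (L := ln lambda) in *.
  destruct (exp_decay_dominates_power L kappa (tau / 2) 1001 HL Hkappa ltac:(lra) ltac:(lra))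
    as [T [HT0 HT]].
  exists (up T). intros n Hn theta [[Htheta [Hsin_lo Hsin_hi]] HT2] m Hm x Hx.
  assert (Ht : T < IZR (Z.abs n)) by (pose proof (archimed T); pose proof (IZR_le _ _ Hn); lra).
  set (t := IZR (Z.abs n)) in *.
  replace (Z.abs m) with m in * by (apply eq_sym, Z.abs_eq, le_IZR; lra).
  destruct (Z.eq_dec x n) as [-> | Hxn].
  { eapply Rle_trans; [| exact Hsin_lo]. apply exp_le. nra. }
  destruct (Z_le_gt_dec (1000 * Z.abs n) (Z.abs x)) as [Hfar | Hnear].
  { left. eapply Rle_lt_trans; [| exact (not_Theta2_sin_gt _ _ _ _ _ Htheta HT2 Hfar)].
    apply exp_le. pose proof (IZR_le _ _ Hx). nra. }
  apply Rnot_lt_le. intros Hsmall.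
  assert (Hx_sin : Rabs (sin (PI * (2 * theta + IZR n * alpha + IZR (x - n) * alpha)))
                   <= exp (- (L * t))).
  { rewrite minus_IZR. replace (2 * theta + IZR n * alpha + (IZR x - IZR n) * alpha)
      with (2 * theta + IZR x * alpha) by ring.
    left. eapply Rlt_le_trans; [exact Hsmall |]. apply exp_le. nra. }
  assert (Hn_sin : Rabs (sin (PI * (2 * theta + IZR n * alpha))) <= exp (- (L * t))).
  { eapply Rle_trans; [exact Hsin_hi |]. apply exp_le. nra. }
  assert (Hk_le : IZR (Z.abs (x - n)) <= 1001 * t)
    by (unfold t; rewrite <- mult_IZR; apply IZR_le; lia).
  pose proof (diophantine_sines_not_both_small _ _ _ _ (x - n) _ _
                Hdio ltac:(lia) Hk_le Hn_sin Hx_sin).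
  specialize (HT t ltac:(lra)). nra.
Qed.
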